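(* For all integers $n\geq 1$, $m\geq 0$, $\operatorname{diam}(Y_{n,m})=\operatorname{ecc}_{Z_{n,m}}(0)$, where $\operatorname{ecc}_{Z_{n,m}}(0)$ is the maximum graph distance in $Z_{n,m}$ from the all-zero vertex $0$ to any vertex.
   Context: Elements of $\mathbb{Z}_n$ are identified with their representatives in $\{0,\dots,n-1\}$. For a subset $S\subseteq\mathbb{Z}$, consider vertices $u=(u_0,\dots,u_{m+1})\in\mathbb{Z}_n\times S^m\times\mathbb{Z}_n$ with $\sum_{i=0}^{m+1}u_i\equiv0\pmod n$; two such vertices $u,v$ are adjacent if there is $0\leq i\leq m$ such that $u_j=v_j$ for all $j\notin\{i,i+1\}$ and either ($u_i=v_i+1$, $u_{i+1}=v_{i+1}-1$) or ($u_i=v_i-1$, $u_{i+1}=v_{i+1}+1$), with arithmetic in coordinates $0,m+1$ taken in $\mathbb{Z}_n$ and in coordinates $1,\dots,m$ in $\mathbb{Z}$. The Yoke graph $Y_{n,m}$ is this graph for $S=\{0,1\}$; the dYoke graph $Z_{n,m}$ is this graph for $S=\{-1,0,1\}$. The vertex $(0,\dots,0)$ is denoted $0$. *)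

From HB Require Import structures.
From mathcomp Require Import all_boot all_order all_algebra.
Set Implicit Arguments. Unset Strict Implicit. Unset Printing Implicit Defensive.
Import Order.TTheory GRing.Theory Num.Theory.
Local Open Scope ring_scope.

(* Vertices of Y_{n,m} / Z_{n,m}: functions u : 'I_(m+2) -> int,
   coordinate 0 and m+1 represent elements of Z_n (representatives in
   {0,..,n-1}), coordinates 1..m lie in S. *)
Definition vtx (m : nat) := {ffun 'I_m.+2 -> int}.

Definition is_end (m : nat) (j : 'I_m.+2) : bool :=
  (val j == 0%N) || (val j == m.+1).

Definition valid (n m : nat) (S : pred int) (u : vtx m) : bool :=
  [forall j : 'I_m.+2,
     if is_end j then (0 <= u j) && (u j < n%:Z) else S (u j)]
  && (((\sum_(j < m.+2) u j) %% n%:Z)%Z == 0).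

Definition coord_eq (n m : nat) (j : 'I_m.+2) (a b : int) : bool :=
  if is_end j then ((a - b) %% n%:Z)%Z == 0 else a == b.

Definition moved (n m : nat) (d : int) (i : 'I_m.+1) (u v : vtx m) : bool :=
  [forall j : 'I_m.+2,
     coord_eq n j (u j)
       (v j + (if val j == val i then d
               else if val j == (val i).+1 then - d else 0))].

Definition adj (n m : nat) (S : pred int) : rel (vtx m) :=
  fun u v => [&& valid n S u, valid n S v &
     [exists i : 'I_m.+1, moved n 1 i u v || moved n (-1) i u v]].

Definition S01 : pred int := fun x => (x == 0) || (x == 1).
Definition Sm101 : pred int := fun x => [|| x == -1, x == 0 | x == 1].

Definition Yoke_adj (n m : nat) : rel (vtx m) := adj n S01.
Definition Yoke_vtx (n m : nat) : pred (vtx m) := valid n S01.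
Definition dYoke_adj (n m : nat) : rel (vtx m) := adj n Sm101.
Definition dYoke_vtx (n m : nat) : pred (vtx m) := valid n Sm101.

Definition zero_vtx (m : nat) : vtx m := [ffun => 0].

Definition is_dist (T : eqType) (e : rel T) (x y : T) (d : nat) : Prop :=
  (exists p : seq T, [/\ path e x p, last x p = y & size p = d]) /\
  (forall p : seq T, path e x p -> last x p = y -> (d <= size p)%N).

Definition is_ecc (T : eqType) (V : pred T) (e : rel T) (x : T) (r : nat) : Prop :=
  (forall y, V y -> exists2 d, is_dist e x y d & (d <= r)%N) /\
  (exists2 y, V y & is_dist e x y r).

Definition is_diam (T : eqType) (V : pred T) (e : rel T) (D : nat) : Prop :=
  (forall x y, V x -> V y -> exists2 d, is_dist e x y d & (d <= D)%N) /\
  (exists x y, [/\ V x, V y & is_dist e x y D]).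

Arguments Yoke_adj n m : clear implicits.
Arguments Yoke_vtx n m : clear implicits.
Arguments dYoke_adj n m : clear implicits.
Arguments dYoke_vtx n m : clear implicits.
Arguments zero_vtx m : clear implicits.

From mathcomp Require Import all_boot all_order all_algebra zify ring.
From Stdlib Require Import Classical.
Set Implicit Arguments. Unset Strict Implicit. Unset Printing Implicit Defensive.
Import Order.TTheory GRing.Theory Num.Theory.
Local Open Scope ring_scope.

(* A walk from x to y moves, across each edge {k, k+1} of the coordinate path
   0 - 1 - ... - (m+1), a net amount g k; the boundary g (k-1) - g k of this
   flow is y - x (modulo n at the two ends), and the walk is at least as long as
   the cost sum_k |g k| of the flow.  Conversely, because the middle coordinates
   range over an interval, x can always move one unit across some edge carrying
   positive flow, so every flow is realised by a walk of length exactly its cost.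
   Hence dist(x, y) is the least cost of a flow with boundary y - x, which only
   depends on y - x.  Up to reducing the ends mod n, the differences of two Yoke
   vertices are exactly the dYoke vertices, so the distances in Y_{n,m} are
   exactly the distances from 0 in Z_{n,m}, and the two maxima agree. *)

Lemma ex_minn_prop (P : nat -> Prop) a :
  P a -> exists2 k, P k & forall j, P j -> (k <= j)%N.
Proof.
elim/ltn_ind: a => a IH Pa.
case: (classic (exists2 j, (j < a)%N & P j)) => [[j lt_ja Pj] | no_less].
  exact: IH lt_ja Pj.
exists a => // j Pj; rewrite leqNgt; apply/negP => lt_ja; apply: no_less.
by exists j.
Qed.

Lemma ex_maxn_prop (P : nat -> Prop) a B : P a -> (forall k, P k -> (k <= B)%N) ->
  exists2 k, P k & forall j, P j -> (j <= k)%N.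
Proof.
elim: B => [|B IH] Pa ubP.
  by exists a => // j /ubP; rewrite leqn0 => /eqP->.
case: (classic (P B.+1)) => [PB | nPB]; first by exists B.+1.
apply: IH => // k Pk; have := ubP k Pk; rewrite leq_eqVlt ltnS.
by case: eqP => // eq_k; rewrite eq_k in Pk.
Qed.

Lemma descend_until (P Q : pred nat) j0 : P j0 ->
  (forall j, (j < j0)%N -> P j.+1 -> ~~ Q j.+1 -> P j) ->
  exists j, [/\ (j <= j0)%N, P j & (j == 0%N) || Q j].
Proof.
elim: j0 => [|j0 IH] Pj0 stepP; first by exists 0%N.
case QS: (Q j0.+1); first by exists j0.+1; rewrite QS orbT.
have [|j [le_j Pj endj]] := IH (stepP j0 (ltnSn _) Pj0 (negbT QS)).
  by move=> j lt_j; apply: stepP; apply: ltnW.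
by exists j; split=> //; apply: leqW.
Qed.

Lemma ascend_until (P Q : pred nat) m j0 : (j0 <= m)%N -> P j0 ->
  (forall j, (j < m)%N -> P j -> ~~ Q j -> P j.+1) ->
  exists j, [/\ (j <= m)%N, P j & (j == m) || Q j].
Proof.
move=> le_j0 Pj0 stepP; move def_k: (m - j0)%N => k.
elim: k j0 le_j0 Pj0 def_k => [|k IH] j0 le_j0 Pj0 def_k.
  have eq_j0 : j0 = m by lia.
  by exists j0; rewrite eq_j0 eqxx; rewrite eq_j0 in Pj0.
case QS: (Q j0); first by exists j0; rewrite QS orbT.
have lt_j0 : (j0 < m)%N by lia.
by apply: (IH j0.+1); [| exact: stepP (negbT QS) | lia].
Qed.

Lemma is_dist_exists (T : eqType) (e : rel T) x p :
  path e x p -> exists c, is_dist e x (last x p) c.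
Proof.
move=> xp.
have [c [q [xq last_q size_q]] min_c] :=
  ex_minn_prop (P := fun c => exists q, [/\ path e x q, last x q = last x p & size q = c])
    (ex_intro _ p (And3 xp erefl erefl)).
exists c; split; first by exists q.
by move=> r xr last_r; apply: min_c; exists r.
Qed.

Definition unit_flow (j : nat) (a : int) : nat -> int := fun k => if k == j then a else 0.

Section Coordinates.
Variables (n m : nat).
Implicit Types (g h : nat -> int) (d e : vtx m).

Definition coord_modulus (t : 'I_m.+2) : int := if is_end t then n%:Z else 0.

Lemma coord_eqE t a b : coord_eq n t a b = (coord_modulus t %| a - b)%Z.
Proof.
rewrite /coord_eq /coord_modulus; case: is_end; first exact/eqP/dvdz_mod0P.
by rewrite dvd0z subr_eq0.
Qed.

Lemma coord_eq_dvd (t : 'I_m.+2) a b : coord_eq n t a b -> (n %| a - b)%Z.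
Proof.
rewrite coord_eqE /coord_modulus; case: is_end => //.
by rewrite dvd0z => /eqP->; apply: dvdz0.
Qed.

Definition coord_equiv d e : Prop := forall t, coord_eq n t (d t) (e t).

Lemma coord_equiv_refl d : coord_equiv d d.
Proof. by move=> t; rewrite coord_eqE subrr dvdz0. Qed.

Lemma coord_equiv_sym d e : coord_equiv d e -> coord_equiv e d.
Proof. by move=> de t; rewrite coord_eqE -opprB rpredN -coord_eqE. Qed.

Lemma coord_equiv_trans d e f : coord_equiv d e -> coord_equiv e f -> coord_equiv d f.
Proof.
move=> de ef t; move: (de t) (ef t); rewrite !coord_eqE => dvd_de dvd_ef.
by rewrite -(subrKA (e t)) rpredD.
Qed.

Lemma coord_equivD d d' e e' :
  coord_equiv d d' -> coord_equiv e e' -> coord_equiv (d + e) (d' + e').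
Proof.
move=> dd ee t; move: (dd t) (ee t); rewrite !coord_eqE !ffunE => dvd_d dvd_e.
by rewrite opprD addrACA rpredD.
Qed.

Lemma coord_equivN d e : coord_equiv d e -> coord_equiv (- d) (- e).
Proof. by move=> de t; move: (de t); rewrite !coord_eqE !ffunE -opprD rpredN. Qed.

Lemma coord_equiv_sum d e : coord_equiv d e -> (n %| \sum_t d t - \sum_t e t)%Z.
Proof. by move=> de; rewrite -sumrB rpred_sum // => t _; apply: coord_eq_dvd. Qed.

Lemma sum_vtxD d e : \sum_t (d + e) t = \sum_t d t + \sum_t e t.
Proof. by rewrite -big_split; apply: eq_bigr => t _; rewrite ffunE. Qed.

Lemma sum_vtxB d e : \sum_t (d - e) t = \sum_t d t - \sum_t e t.
Proof. by rewrite -sumrB; apply: eq_bigr => t _; rewrite !ffunE. Qed.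

Lemma zero_vtxE : zero_vtx m = 0.
Proof. by apply/ffunP => t; rewrite !ffunE. Qed.

Definition canon d : vtx m := [ffun t => if is_end t then (d t %% n%:Z)%Z else d t].

Lemma canon_equiv d : coord_equiv (canon d) d.
Proof.
move=> t; rewrite coord_eqE ffunE /coord_modulus; case: is_end; last first.
  by rewrite subrr dvdz0.
by rewrite -eqz_mod_dvd modz_mod.
Qed.

Lemma canon_addK_equiv d e : coord_equiv (canon (d + e) - d) e.
Proof.
have := coord_equivD (canon_equiv (d + e)) (coord_equiv_refl (- d)).
by rewrite addrAC subrr add0r.
Qed.

Section Valid.
Variable S : pred int.
Implicit Types u v : vtx m.

Lemma valid_end u t : valid n S u -> is_end t -> 0 <= u t < n%:Z.
Proof. by case/andP => /forallP/(_ t) + _ end_t; rewrite end_t. Qed.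

Lemma valid_mid u t : valid n S u -> ~~ is_end t -> S (u t).
Proof. by case/andP => /forallP/(_ t) + _ /negbTE mid_t; rewrite mid_t. Qed.

Lemma valid_sum u : valid n S u -> (n %| \sum_t u t)%Z.
Proof. by case/andP => _ /eqP/dvdz_mod0P. Qed.

Lemma valid_sumB u v : valid n S u -> valid n S v -> (n %| \sum_t (v - u) t)%Z.
Proof. by move=> u_ok v_ok; rewrite sum_vtxB rpredB ?(valid_sum u_ok) ?(valid_sum v_ok). Qed.

Lemma valid_zero : (0 < n)%N -> S 0 -> valid n S (zero_vtx m).
Proof.
move=> n_gt0 S0; apply/andP; split.
  by apply/forallP => t; rewrite ffunE lexx ltz_nat n_gt0; case: is_end.
by rewrite big1 ?mod0z // => t _; rewrite ffunE.
Qed.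

Lemma valid_canon d : (0 < n)%N -> (forall t, ~~ is_end t -> S (d t)) ->
  (n %| \sum_t d t)%Z -> valid n S (canon d).
Proof.
move=> n_gt0 midS dvd_sum; apply/andP; split.
  apply/forallP => t; rewrite ffunE; case: (boolP (is_end t)) => [_ | /midS //].
  by rewrite modz_ge0 ?ltz_pmod // ?ltz_nat // eqz_nat -lt0n.
apply/eqP/dvdz_mod0P; rewrite -(subrK (\sum_t d t) (\sum_t _)) rpredD //.
exact/coord_equiv_sum/canon_equiv.
Qed.

(* The last coordinate absorbs the coordinate sum. *)
Lemma valid_extend (f : 'I_m.+2 -> int) : (0 < n)%N -> (forall t, ~~ is_end t -> S (f t)) ->
  exists2 u, valid n S u & forall t, ~~ is_end t -> u t = f t.
Proof.
move=> n_gt0 fS; pose mid : vtx m := [ffun t => if is_end t then 0 else f t].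
have not_max t : ~~ is_end t -> (t == ord_max) = false.
  by move=> mid_t; apply: contraNF mid_t => /eqP ->; rewrite /is_end eqxx orbT.
exists (canon (mid - [ffun t => if t == ord_max then \sum_s mid s else 0])); last first.
  by move=> t mid_t; rewrite !ffunE (negbTE mid_t) not_max // subr0.
apply: valid_canon => // [t mid_t|].
  by rewrite !ffunE not_max // (negbTE mid_t) subr0; apply: fS.
rewrite sum_vtxB [X in _ - X](bigD1 ord_max) //= ffunE eqxx.
rewrite [\sum_(i < m.+2 | i != ord_max) _]big1 ?addr0 ?subrr ?dvdz0 // => t t_max.
by rewrite ffunE (negbTE t_max).
Qed.

Lemma valid_equiv_eq u v : valid n S u -> valid n S v -> coord_equiv u v -> u = v.
Proof.
move=> u_ok v_ok uv; apply/ffunP => t; have := uv t.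
rewrite coord_eqE /coord_modulus; case: (boolP (is_end t)) => [end_t | _].
  rewrite -eqz_mod_dvd (modz_small (valid_end u_ok end_t)).
  by rewrite (modz_small (valid_end v_ok end_t)) => /eqP.
by rewrite dvd0z subr_eq0 => /eqP.
Qed.

End Valid.

Definition coordn d (k : nat) : int := d (inord k).

Lemma coordn_val d (t : 'I_m.+2) : coordn d t = d t.
Proof. by rewrite /coordn inord_val. Qed.

Lemma coordnB d e k : coordn (d - e) k = coordn d k - coordn e k.
Proof. by rewrite /coordn !ffunE. Qed.

(* [g k] is the net amount moved from coordinate [k] to coordinate [k + 1];
   only [g 0], ..., [g m] matter. *)
Definition bdry g : vtx m := [ffun t : 'I_m.+2 =>
  (if val t is k.+1 then g k else 0) - (if (val t <= m)%N then g (val t) else 0)].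

Definition carries g d : Prop := coord_equiv d (bdry g).

Definition cost g : nat := (\sum_(i < m.+1) `|g i|)%N.

Definition is_mincost d (c : nat) : Prop :=
  (exists2 g, carries g d & cost g = c) /\ (forall g, carries g d -> (c <= cost g)%N).

Lemma sum_bdry g : \sum_t bdry g t = 0.
Proof.
under eq_bigr do rewrite ffunE.
rewrite sumrB big_ord_recl [X in _ - X]big_ord_recr /= ltnn add0r addr0.
apply/eqP; rewrite subr_eq0; apply/eqP.
by apply: eq_bigr => i _; rewrite -ltnS ltn_ord.
Qed.

Lemma bdryD g h : bdry (fun k => g k + h k) = bdry g + bdry h.
Proof. by apply/ffunP => -[[|k] lt_k]; rewrite !ffunE /=; [lia | case: ifP; lia]. Qed.

Lemma bdryN g : bdry (fun k => - g k) = - bdry g.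
Proof. by apply/ffunP => -[[|k] lt_k]; rewrite !ffunE /=; [lia | case: ifP; lia]. Qed.

Lemma eq_bdry g h : (forall k, (k <= m)%N -> g k = h k) -> bdry g = bdry h.
Proof.
move=> gh; apply/ffunP => -[[|k] lt_k]; rewrite !ffunE /=; first by rewrite gh.
by rewrite (gh k lt_k); case: ifP => // lt_km; rewrite gh.
Qed.

Lemma bdry0 : bdry (fun=> 0) = 0.
Proof. by apply/ffunP => -[[|k] lt_k]; rewrite !ffunE /= ?if_same subrr. Qed.

Lemma bdry_unit_flow j a (t : 'I_m.+2) : (j <= m)%N ->
  bdry (unit_flow j a) t = (if val t == j.+1 then a else 0) - (if val t == j then a else 0).
Proof.
move=> le_j; rewrite ffunE /unit_flow; case: t => [[|k] lt_k] //=.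
rewrite eqSS; case: (k.+1 =P j) => [eq_kj | _]; last by rewrite if_same.
by rewrite -eq_kj in le_j; rewrite le_j.
Qed.

Lemma carries_mid g d k : carries g d -> (0 < k <= m)%N -> coordn d k = g k.-1 - g k.
Proof.
move=> gd /andP [k_gt0 le_km]; have := gd (inord k).
have lt_k : (k < m.+2)%N by rewrite ltnS leqW.
rewrite /coordn /coord_eq /is_end ffunE /= (inordK lt_k) (gtn_eqF k_gt0).
rewrite (ltn_eqF (le_km : (k < m.+1)%N)) /= => /eqP ->.
by case: k k_gt0 le_km {lt_k} => // k _ ->.
Qed.

Lemma carriesD g h d e : carries g d -> carries h e -> carries (fun k => g k + h k) (d + e).
Proof. by rewrite /carries bdryD; apply: coord_equivD. Qed.

Lemma carriesN g d : carries g d -> carries (fun k => - g k) (- d).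
Proof. by rewrite /carries bdryN; apply: coord_equivN. Qed.

Lemma carries_equiv g d e : coord_equiv d e -> carries g d -> carries g e.
Proof. by move/coord_equiv_sym; apply: coord_equiv_trans. Qed.

Lemma is_mincost_equiv d e c : coord_equiv d e -> is_mincost d c -> is_mincost e c.
Proof.
move=> de [[g gd cost_g] min_c]; split; first by exists g => //; apply: carries_equiv gd.
by move=> h he; apply/min_c/(carries_equiv (coord_equiv_sym de)).
Qed.

Lemma costD_le g h : (cost (fun k => (g k + h k)%R) <= cost g + cost h)%N.
Proof. by rewrite /cost -big_split leq_sum // => i _ /=; lia. Qed.

Lemma costN g : cost (fun k => - g k) = cost g.
Proof. by apply: eq_bigr => i _; rewrite abszN. Qed.

Lemma cost_unit_flow j a : (j <= m)%N -> cost (unit_flow j a) = `|a|%N.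
Proof.
move=> le_j; rewrite /cost (bigD1 (Ordinal (le_j : (j < m.+1)%N))) //= big1 ?addn0.
  by rewrite /unit_flow eqxx.
by move=> i /eqP ne_i; rewrite /unit_flow; case: eqP => // eq_i; case: ne_i; apply: val_inj.
Qed.

Lemma cost_sub_unit_flow g j : (j <= m)%N -> 0 < g j ->
  (cost (fun k => g k - unit_flow j 1 k)).+1 = cost g.
Proof.
move=> le_j gj_gt0; pose j' := Ordinal (le_j : (j < m.+1)%N).
rewrite /cost (bigD1 j') // [in RHS](bigD1 j') //= /unit_flow eqxx -addSn.
congr (_ + _)%N; first lia.
apply: eq_bigr => i /eqP ne_i; case: eqP => [eq_i | _]; last by rewrite subr0.
by case: ne_i; apply: val_inj.
Qed.

Lemma cost_eq0 g : cost g = 0%N -> forall k, (k <= m)%N -> g k = 0.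
Proof.
move/eqP; rewrite /cost sum_nat_eq0 => /forallP g0 k le_k.
by have := g0 (Ordinal (le_k : (k < m.+1)%N)); rewrite /= absz_eq0 => /eqP.
Qed.

Lemma cost_gt0 g : (0 < cost g)%N -> exists2 k, (k <= m)%N & g k != 0.
Proof.
move=> cost_gt0; case: (pickP (fun i : 'I_m.+1 => g i != 0)) => [i gi | g0].
  by exists i; rewrite ?leq_ord.
by move: cost_gt0; rewrite /cost big1 // => i _; have /negbFE/eqP-> := g0 i.
Qed.

Definition psum_flow d : nat -> int := fun k => - \sum_(i < k.+1) coordn d i.

Lemma carries_psum_flow d : (n %| \sum_t d t)%Z -> carries (psum_flow d) d.
Proof.
move=> dvd_sum t; have [k lt_k ->] : exists2 k, (k < m.+2)%N & t = inord k.
  by exists (val t); rewrite ?ltn_ord ?inord_val.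
rewrite -/(coordn d k) coord_eqE ffunE /coord_modulus /is_end /= inordK // /psum_flow.
case: k lt_k => [|k] lt_k /=; first by rewrite big_ord1 sub0r opprK subrr dvdz0.
rewrite eqSS; have [lt_km | ge_km] := ltnP k m.
  by rewrite (ltn_eqF lt_km) dvd0z [\sum_(i < k.+2) _]big_ord_recr /= opprK addKr subrr.
have -> : k = m by lia.
have sum_d : \sum_t d t = \sum_(i < m.+1) coordn d i + coordn d m.+1.
  rewrite big_ord_recr /= -coordn_val; congr (_ + _).
  by apply: eq_bigr => i _; rewrite -coordn_val.
by rewrite eqxx subr0 opprK addrC -sum_d.
Qed.

Lemma cost_psum_flow_le d (B : nat) :
  (forall t, (`|d t| <= B)%N) -> (cost (psum_flow d) <= m.+1 * (m.+1 * B))%N.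
Proof.
move=> d_le; have coordn_le k : (`|coordn d k| <= B)%N := d_le (inord k).
have psum_le k : (`|psum_flow d k| <= k.+1 * B)%N.
  rewrite abszN; elim: k => [|k IH]; first by rewrite big_ord1 mul1n.
  rewrite big_ord_recr /= mulSn; move: IH (coordn_le k.+1).
  by move: (\sum_(i < k.+1) coordn d i) (k.+1 * B)%N => s kB; lia.
apply: (@leq_trans (\sum_(i < m.+1) m.+1 * B)%N); last by rewrite sum_nat_const card_ord.
by apply: leq_sum => i _; rewrite (leq_trans (psum_le i)) // leq_mul2r ltnS leq_ord orbT.
Qed.

Lemma moved_carries a (i : 'I_m.+1) (u v : vtx m) :
  moved n a i u v <-> carries (unit_flow i a) (v - u).
Proof.
have shift t : coord_eq n t (u t)
    (v t + (if val t == val i then a else if val t == (val i).+1 then - a else 0))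
  = coord_eq n t ((v - u) t) (bdry (unit_flow i a) t).
  rewrite bdry_unit_flow ?leq_ord // !coord_eqE !ffunE -[in RHS]rpredN.
  congr (_ %| _)%Z; have [t_i | _] := eqVneq (val t) (val i).
    by rewrite t_i (ltn_eqF (ltnSn _)); ring.
  by case: eqVneq => _; ring.
by split => [/forallP mv t | vu]; [rewrite -shift | apply/forallP => t; rewrite shift].
Qed.

Section Adjacency.
Variable S : pred int.
Implicit Types u v : vtx m.

Lemma adj_carries u v : adj n S u v -> exists2 g, carries g (v - u) & cost g = 1%N.
Proof.
case/and3P => _ _ /existsP [i /orP [] /moved_carries mv];
  by eexists; [exact: mv | rewrite cost_unit_flow ?leq_ord].
Qed.

Lemma adj_unit_flow (i : 'I_m.+1) u v : valid n S u -> valid n S v ->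
  carries (unit_flow i 1) (v - u) -> adj n S u v.
Proof.
move=> u_ok v_ok /moved_carries mv; rewrite /adj u_ok v_ok.
by apply/existsP; exists i; rewrite mv.
Qed.

Lemma adj_sym u v : adj n S u v -> adj n S v u.
Proof.
case/and3P => u_ok v_ok /existsP [i mv]; rewrite /adj u_ok v_ok; apply/existsP; exists i.
have flip (a : int) : moved n a i u v -> moved n (- a) i v u.
  move/moved_carries/carriesN; rewrite opprB /carries => vu; apply/moved_carries.
  rewrite /carries (eq_bdry (h := fun k => - unit_flow i a k)) // => k _.
  by rewrite /unit_flow; case: eqP.
by case/orP: mv => /flip; [move=> ->; rewrite orbT | rewrite opprK => ->].
Qed.

Lemma path_flow u p : path (adj n S) u p ->
  exists2 g, carries g (last u p - u) & (cost g <= size p)%N.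
Proof.
elim: p u => [|v p IH] u /=.
  move=> _; exists (fun=> 0); last by rewrite /cost big1.
  by rewrite /carries subrr bdry0; apply: coord_equiv_refl.
case/andP => /adj_carries [g uv cost_g] /IH [h vp cost_h].
exists (fun k => g k + h k); first by rewrite -(subrKA v) addrC; apply: carriesD.
by rewrite (leq_trans (costD_le g h)) // cost_g add1n.
Qed.

End Adjacency.
End Coordinates.

Section IntervalCoordinates.
Variables (n m : nat) (lo hi : int) (S : pred int).
Hypotheses (n_gt0 : (0 < n)%N) (lo_lt_hi : lo < hi).
Hypothesis S_itv : forall z, S z = (lo <= z <= hi).
Implicit Types (x y : vtx m) (g : nat -> int).

Lemma valid_coordn_mid x k : valid n S x -> (0 < k <= m)%N -> lo <= coordn x k <= hi.
Proof.
move=> x_ok /andP [k_gt0 le_km]; rewrite -S_itv; apply: (valid_mid x_ok).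
have lt_k : (k < m.+2)%N by rewrite ltnS leqW.
by rewrite /is_end /= (inordK lt_k) (gtn_eqF k_gt0) (ltn_eqF (le_km : (k < m.+1)%N)).
Qed.

(* Walk left from [j0] while x sits at [lo], then right while the next
   coordinate of x sits at [hi]; since y lies in the same interval, the flow
   does not decrease along either walk. *)
Lemma free_edge x y g j0 : valid n S x -> valid n S y -> carries n g (y - x) ->
  (j0 <= m)%N -> 0 < g j0 ->
  exists j, [/\ (j <= m)%N, 0 < g j, (j == 0%N) || (lo < coordn x j)
              & (j == m) || (coordn x j.+1 < hi)].
Proof.
move=> x_ok y_ok gyx le_j0 gj0.
have slope k : (0 < k <= m)%N -> coordn y k - coordn x k = g k.-1 - g k.
  by move=> k_mid; rewrite -(carries_mid gyx k_mid) coordnB.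
have bounds k : (0 < k <= m)%N -> (lo <= coordn x k <= hi) && (lo <= coordn y k <= hi).
  by move=> k_mid; rewrite !valid_coordn_mid.
have [j1 [le_j1 gj1 left_j1]] :
    exists j, [/\ (j <= j0)%N, 0 < g j & (j == 0%N) || (lo < coordn x j)].
  apply: (descend_until (P := fun j => 0 < g j)) gj0 _ => j lt_j gSj.
  have k_mid : (0 < j.+1 <= m)%N by rewrite ltn0Sn (leq_trans lt_j).
  by move: (slope _ k_mid) (bounds _ k_mid) => /=; lia.
have [j [le_j /andP [gj left_j] right_j]] :
    exists j, [/\ (j <= m)%N, (0 < g j) && ((j == 0%N) || (lo < coordn x j))
                & (j == m) || (coordn x j.+1 < hi)].
  apply: (ascend_until (P := fun j => (0 < g j) && ((j == 0%N) || (lo < coordn x j)))).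
  - exact: leq_trans le_j1 le_j0.
  - by rewrite gj1.
  - move=> j lt_jm /andP [gj _]; have k_mid : (0 < j.+1 <= m)%N by rewrite ltn0Sn.
    by move: (slope _ k_mid) (bounds _ k_mid) => /=; lia.
by exists j.
Qed.

Lemma valid_move x j : valid n S x -> (j <= m)%N ->
  (j == 0%N) || (lo < coordn x j) -> (j == m) || (coordn x j.+1 < hi) ->
  valid n S (canon n (x + bdry m (unit_flow j 1))).
Proof.
move=> x_ok le_j left_j right_j; apply: valid_canon => // [t mid_t|]; last first.
  by rewrite sum_vtxD sum_bdry addr0; apply: valid_sum x_ok.
rewrite ffunE bdry_unit_flow // S_itv -coordn_val.
have := valid_mid x_ok mid_t; rewrite S_itv -coordn_val.
move: mid_t; rewrite /is_end /= => /norP [t_neq0 t_neqm1].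
have [t_j1 | _] := eqVneq (t : nat) j.+1.
  by rewrite t_j1 (gtn_eqF (ltnSn j)) in t_neqm1 *; lia.
have [t_j | _] := eqVneq (t : nat) j; last by lia.
by rewrite t_j in t_neq0 *; lia.
Qed.

Lemma flow_step x y g j0 : valid n S x -> valid n S y -> carries n g (y - x) ->
  (j0 <= m)%N -> 0 < g j0 ->
  exists x1 g1, [/\ adj n S x x1, valid n S x1, carries n g1 (y - x1)
                  & (cost m g1).+1 = cost m g].
Proof.
move=> x_ok y_ok gyx le_j0 gj0.
have [j [le_j gj left_j right_j]] := free_edge x_ok y_ok gyx le_j0 gj0.
set x1 := canon n (x + bdry m (unit_flow j 1)).
have x1_ok : valid n S x1 by apply: valid_move.
have move_j : carries n (unit_flow j 1) (x1 - x) by apply: canon_addK_equiv.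
exists x1, (fun k => g k - unit_flow j 1 k); split => //.
- exact: (adj_unit_flow (i := Ordinal (le_j : (j < m.+1)%N))).
- by have := carriesD gyx (carriesN move_j); rewrite opprB addrA subrK.
- exact: cost_sub_unit_flow le_j gj.
Qed.

Lemma flow_path k x y g : valid n S x -> valid n S y -> carries n g (y - x) ->
  cost m g = k -> exists p, [/\ path (adj n S) x p, last x p = y & size p = k].
Proof.
elim: k x y g => [|k IH] x y g x_ok y_ok gyx cost_g.
  exists [::]; split => //=; apply/(valid_equiv_eq x_ok y_ok)/coord_equiv_sym.
  move: gyx; rewrite /carries (eq_bdry (h := fun=> 0)) ?bdry0; last exact: cost_eq0.
  by move/(coord_equivD (coord_equiv_refl n x)); rewrite subrKC addr0.
have [j le_j gj_neq0] : exists2 j, (j <= m)%N & g j != 0 by apply: cost_gt0; rewrite cost_g.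
have [gj_gt0 | gj_lt0 | gj0] := ltrgt0P (g j); last by rewrite gj0 eqxx in gj_neq0.
  have [x1 [g1 [xx1 x1_ok g1yx1 cost_g1]]] := flow_step x_ok y_ok gyx le_j gj_gt0.
  have cost_g1k : cost m g1 = k by apply/eq_add_S; rewrite cost_g1.
  have [p [x1p last_p size_p]] := IH x1 y g1 x1_ok y_ok g1yx1 cost_g1k.
  by exists (x1 :: p); rewrite /= xx1 x1p size_p.
have gxy : carries n (fun k => - g k) (x - y) by rewrite -opprB; apply: carriesN.
have ngj_gt0 : 0 < - g j by rewrite oppr_gt0.
have [y1 [g1 [yy1 y1_ok g1xy1 cost_g1]]] := flow_step y_ok x_ok gxy le_j ngj_gt0.
have [p [xp last_p size_p]] : exists p, [/\ path (adj n S) x p, last x p = y1 & size p = k].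
  apply: (IH x y1 (fun k => - g1 k)) => //; first by rewrite -opprB; apply: carriesN.
  by apply/eq_add_S; rewrite costN cost_g1 costN.
exists (rcons p y); rewrite rcons_path xp last_p last_rcons size_rcons size_p.
by split => //; apply: adj_sym.
Qed.

Lemma is_dist_mincost x y c : valid n S x -> valid n S y ->
  is_dist (adj n S) x y c <-> is_mincost n (y - x) c.
Proof.
move=> x_ok y_ok; split => [[[p [xp last_p size_p]] min_c] | [[g gyx cost_g] min_c]].
  have shortest g : carries n g (y - x) -> (c <= cost m g)%N.
    move=> gyx; have [q [xq last_q <-]] := flow_path x_ok y_ok gyx erefl.
    exact: min_c.
  have [g0 g0yx cost_g0] := path_flow xp; rewrite last_p in g0yx.
  split => //; exists g0 => //; apply/eqP; rewrite eqn_leq shortest // andbT -size_p //.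
split; first by have [p] := flow_path x_ok y_ok gyx cost_g; exists p.
move=> p xp last_p; have [g1 g1yx cost_g1] := path_flow xp.
by rewrite last_p in g1yx; apply: leq_trans (min_c _ g1yx) cost_g1.
Qed.

Lemma exists_dist x y : valid n S x -> valid n S y -> exists c, is_dist (adj n S) x y c.
Proof.
move=> x_ok y_ok; have psum_yx := carries_psum_flow (valid_sumB x_ok y_ok).
have [p [xp last_p _]] := flow_path x_ok y_ok psum_yx erefl.
by rewrite -last_p; apply: is_dist_exists xp.
Qed.

Lemma dist_le x y c : valid n S x -> valid n S y -> is_dist (adj n S) x y c ->
  (c <= m.+1 * (m.+1 * (n + `|(hi - lo)%R|)))%N.
Proof.
move=> x_ok y_ok /(is_dist_mincost c x_ok y_ok) [_ min_c].
apply: leq_trans (min_c _ (carries_psum_flow (valid_sumB x_ok y_ok))) _.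
apply: cost_psum_flow_le => t; have -> : (y - x) t = y t - x t by rewrite !ffunE.
case: (boolP (is_end t)) => [end_t | mid_t].
  by move: (valid_end x_ok end_t) (valid_end y_ok end_t); lia.
by move: (valid_mid x_ok mid_t) (valid_mid y_ok mid_t); rewrite !S_itv; lia.
Qed.

End IntervalCoordinates.

Lemma S01_itv z : S01 z = (0 <= z <= 1).
Proof. by rewrite /S01; apply/idP/idP; lia. Qed.

Lemma Sm101_itv z : Sm101 z = (-1 <= z <= 1).
Proof. by rewrite /Sm101; apply/idP/idP; lia. Qed.

Section Yoke.
Variables (n m : nat).
Hypothesis n_gt0 : (0 < n)%N.

Definition Yoke_dist c : Prop :=
  exists x y, [/\ Yoke_vtx n m x, Yoke_vtx n m y & is_dist (Yoke_adj n m) x y c].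

Lemma Yoke_exists_dist x y : Yoke_vtx n m x -> Yoke_vtx n m y ->
  exists c, is_dist (Yoke_adj n m) x y c.
Proof. exact: (exists_dist n_gt0 ltr01 S01_itv). Qed.

Lemma dYoke_exists_dist x y : dYoke_vtx n m x -> dYoke_vtx n m y ->
  exists c, is_dist (dYoke_adj n m) x y c.
Proof. exact: (exists_dist n_gt0 (isT : (-1 : int) < 1) Sm101_itv). Qed.

Lemma Yoke_dist_le c : Yoke_dist c -> (c <= m.+1 * (m.+1 * n.+1))%N.
Proof.
case=> x [y [x_ok y_ok dist_xy]].
by have := dist_le n_gt0 ltr01 S01_itv x_ok y_ok dist_xy; rewrite subr0 addn1.
Qed.

Lemma dYoke_vtx_diff x y : Yoke_vtx n m x -> Yoke_vtx n m y -> dYoke_vtx n m (canon n (y - x)).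
Proof.
move=> x_ok y_ok; apply: valid_canon => // [t mid_t|]; last exact: valid_sumB x_ok y_ok.
have -> : (y - x) t = y t - x t by rewrite !ffunE.
by move: (valid_mid x_ok mid_t) (valid_mid y_ok mid_t); rewrite Sm101_itv !S01_itv; lia.
Qed.

(* x has a 1 exactly where w has a -1, which makes x + w a Yoke vertex. *)
Lemma Yoke_vtx_lift w : dYoke_vtx n m w ->
  exists x y, [/\ Yoke_vtx n m x, Yoke_vtx n m y & coord_equiv n (y - x) w].
Proof.
move=> w_ok; have [x x_ok x_mid] :
    exists2 x, Yoke_vtx n m x & forall t, ~~ is_end t -> x t = (w t == -1)%:Z.
  by apply: valid_extend => // t _; rewrite S01_itv; case: eqP.
exists x, (canon n (x + w)); split => //; last exact: canon_addK_equiv.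
apply: valid_canon => // [t mid_t|]; last first.
  by rewrite sum_vtxD rpredD ?(valid_sum x_ok) ?(valid_sum w_ok).
have -> : (x + w) t = x t + w t by rewrite !ffunE.
move: (valid_mid w_ok mid_t); rewrite x_mid // Sm101_itv S01_itv.
by case: eqP => [->|]; lia.
Qed.

Lemma dYoke_dist0_iff c :
  (exists2 w, dYoke_vtx n m w & is_dist (dYoke_adj n m) (zero_vtx m) w c) <-> Yoke_dist c.
Proof.
have zero_ok : dYoke_vtx n m (zero_vtx m) by apply: valid_zero.
have dist0 w : dYoke_vtx n m w ->
    is_dist (dYoke_adj n m) (zero_vtx m) w c <-> is_mincost n w c.
  move=> w_ok; have := is_dist_mincost n_gt0 (isT : (-1 : int) < 1) Sm101_itv c zero_ok w_ok.
  by rewrite zero_vtxE subr0.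
have Yoke_mincost x y : Yoke_vtx n m x -> Yoke_vtx n m y ->
    is_dist (Yoke_adj n m) x y c <-> is_mincost n (y - x) c.
  exact: (is_dist_mincost n_gt0 ltr01 S01_itv c).
split => [[w w_ok /(dist0 _ w_ok) w_c] | [x [y [x_ok y_ok /(Yoke_mincost _ _ x_ok y_ok) yx_c]]]].
  have [x [y [x_ok y_ok yx_w]]] := Yoke_vtx_lift w_ok.
  exists x, y; split => //; apply/(Yoke_mincost _ _ x_ok y_ok).
  exact: is_mincost_equiv (coord_equiv_sym yx_w) w_c.
have w_ok := dYoke_vtx_diff x_ok y_ok.
exists (canon n (y - x)) => //; apply/(dist0 _ w_ok).
exact: is_mincost_equiv (coord_equiv_sym (canon_equiv n (y - x))) yx_c.
Qed.

End Yoke.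

Theorem theorem4p5 (n m : nat) : (1 <= n)%N ->
  exists D : nat,
    is_diam (Yoke_vtx n m) (Yoke_adj n m) D /\
    is_ecc (dYoke_vtx n m) (dYoke_adj n m) (zero_vtx m) D.
Proof.
move=> n_gt0; have zero_ok : Yoke_vtx n m (zero_vtx m) by apply: valid_zero.
have [c0 dist0] := Yoke_exists_dist n_gt0 zero_ok zero_ok.
have Yoke_dist_c0 : Yoke_dist n m c0 by exists (zero_vtx m), (zero_vtx m).
have [D [x [y [x_ok y_ok dist_xy]]] D_max] :=
  ex_maxn_prop Yoke_dist_c0 (@Yoke_dist_le n m n_gt0).
exists D; split; split.
- move=> x' y' x'_ok y'_ok; have [c dist_c] := Yoke_exists_dist n_gt0 x'_ok y'_ok.
  by exists c => //; apply: D_max; exists x', y'.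
- by exists x, y.
- move=> w w_ok; have dzero_ok : dYoke_vtx n m (zero_vtx m) by apply: valid_zero.
  have [c dist_c] := dYoke_exists_dist n_gt0 dzero_ok w_ok.
  by exists c => //; apply/D_max/(dYoke_dist0_iff _ n_gt0); exists w.
- have /(dYoke_dist0_iff _ n_gt0) [w w_ok dist_w] : Yoke_dist n m D by exists x, y.
  by exists w.
Qed.
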